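(* Let $X,Y$ be metric spaces, $\mathcal H$ a Hilbert space, and $T\colon\ell^2(X;\mathcal H)\to\ell^2(Y;\mathcal H)$ a weakly approximately controlled bounded operator. Then for every $r\ge0$ and $\delta>0$ there is $R\ge0$ such that whenever $A\subseteq X$ has $\mathrm{diam}(A)\le r$ and $C,C'\subseteq Y$ satisfy $\|\chi_CT\chi_A\|\ge\delta$ and $\|\chi_{C'}T\chi_A\|\ge\delta$, then $d_Y(C,C')\le R$.
   Context: For $A\subseteq X$, $\chi_A$ is the orthogonal projection of $\ell^2(X;\mathcal H)$ onto $\ell^2(A;\mathcal H)$ (similarly on $Y$). An operator $t$ on $\ell^2(X;\mathcal H)$ has propagation at most $R$ if $\chi_Bt\chi_A=0$ whenever $d(A,B)>R$; it is $\varepsilon$-$R$-approximable if there is $s$ of propagation at most $R$ with $\|s-t\|\le\varepsilon$. $T\colon\ell^2(X;\mathcal H)\to\ell^2(Y;\mathcal H)$ is weakly approximately controlled if for every $r\ge0$ and $\varepsilon>0$ there is $R\ge0$ such that $TtT^*$ is $\varepsilon$-$R$-approximable for every $t\in\mathcal B(\ell^2(X;\mathcal H))$ with $\|t\|\le1$ and propagation at most $r$. *)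

From HB Require Import structures.
From mathcomp Require Import all_boot all_order all_algebra.
From mathcomp Require Import all_classical all_reals all_analysis.
From mathcomp Require Import complex.
Set Implicit Arguments. Unset Strict Implicit. Unset Printing Implicit Defensive.
Import Order.TTheory GRing.Theory Num.Theory.
Local Open Scope classical_set_scope.
Local Open Scope ring_scope.

Section Defs.
Variable R : realType.
Local Notation C := (R[i]).

Definition is_metric (X : choiceType) (d : X -> X -> R) : Prop :=
  [/\ (forall x y, 0 <= d x y),
      (forall x y, d x y = 0 <-> x = y),
      (forall x y, d x y = d y x) &
      (forall x y z, d x z <= d x y + d y z)].

(** d(A,B) = inf {d(a,b) | a in A, b in B}  (= +oo if A or B is empty). *)
Definition setdist (X : choiceType) (d : X -> X -> R) (A B : set X) : \bar R :=
  ereal_inf [set (d a b)%:E | a in A & b in B].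

(** diam(A) = sup {d(a,b) | a, b in A}  (= -oo if A is empty). *)
Definition diam (X : choiceType) (d : X -> X -> R) (A : set X) : \bar R :=
  ereal_sup [set (d a b)%:E | a in A & b in A].

(** Complex Hilbert spaces: an inner product (linear in the first variable,
    conjugate-linear in the second), complete for the induced norm. *)
Section Hilbert.
Variable H : lmodType C.
Variable ip : H -> H -> C.

Definition hnorm (v : H) : R := Num.sqrt (complex.Re (ip v v)).

Definition is_hilbert : Prop :=
  [/\ (forall (a : C) (u v w : H), ip (a *: u + v) w = a * ip u w + ip v w),
      (forall u v : H, ip u v = conjc (ip v u)),
      (forall u : H, 0 <= ip u u),
      (forall u : H, ip u u = 0 -> u = 0) &
      (forall u : nat -> H,
         (forall e : R, 0 < e -> exists N, forall m n, (N <= m)%N -> (N <= n)%N ->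
              hnorm (u m - u n) < e) ->
         exists l : H, forall e : R, 0 < e -> exists N, forall n, (N <= n)%N ->
              hnorm (u n - l) < e)].

(** l^2(X;H), represented by functions X -> H with finite square sum. *)
Definition l2sq (X : choiceType) (f : X -> H) : \bar R :=
  \esum_(x in [set: X]) ((hnorm (f x)) ^+ 2)%:E.
Definition in_l2 (X : choiceType) (f : X -> H) : Prop := (l2sq f < +oo)%E.
Definition l2norm (X : choiceType) (f : X -> H) : R := Num.sqrt (fine (l2sq f)).

(** Sums of absolutely summable real / complex families over a set. *)
Definition rsum (X : choiceType) (u : X -> R) : R :=
  fine (\esum_(x in [set: X]) (Num.max (u x) 0)%:E)
  - fine (\esum_(x in [set: X]) (Num.max (- u x) 0)%:E).
Definition csum (X : choiceType) (u : X -> C) : C :=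
  Complex (rsum (fun x => complex.Re (u x))) (rsum (fun x => complex.Im (u x))).

Definition l2ip (X : choiceType) (f g : X -> H) : C := csum (fun x => ip (f x) (g x)).

(** Operators l^2(X;H) -> l^2(Y;H) are modelled as maps (X -> H) -> (Y -> H),
    only their values on l^2 vectors being relevant. *)
Definition opnorm_le (X Y : choiceType) (t : (X -> H) -> (Y -> H)) (c : R) : Prop :=
  forall f, in_l2 f -> l2norm (t f) <= c * l2norm f.

Definition opnorm (X Y : choiceType) (t : (X -> H) -> (Y -> H)) : \bar R :=
  ereal_inf [set c%:E | c in [set c : R | 0 <= c /\ opnorm_le t c]].

Definition bounded_op (X Y : choiceType) (t : (X -> H) -> (Y -> H)) : Prop :=
  [/\ (forall (a : C) f g, in_l2 f -> in_l2 g ->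
         t (fun x => a *: f x + g x) = (fun y => a *: t f y + t g y)),
      (forall f, in_l2 f -> in_l2 (t f)) &
      exists c : R, opnorm_le t c].

Definition is_adjoint (X Y : choiceType) (T : (X -> H) -> (Y -> H))
    (S : (Y -> H) -> (X -> H)) : Prop :=
  bounded_op S /\
  forall f g, in_l2 f -> in_l2 g -> l2ip (T f) g = l2ip f (S g).

Definition chi (X : choiceType) (A : set X) (f : X -> H) : X -> H :=
  fun x => if `[< A x >] then f x else 0.

Definition propagation_le (X : choiceType) (d : X -> X -> R)
    (t : (X -> H) -> (X -> H)) (r : R) : Prop :=
  forall A B : set X, (r%:E < setdist d A B)%E ->
    forall f, in_l2 f -> chi B (t (chi A f)) = (fun _ => 0).

Definition approximable (X : choiceType) (d : X -> X -> R)
    (t : (X -> H) -> (X -> H)) (eps Rr : R) : Prop :=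
  exists s, [/\ bounded_op s, propagation_le d s Rr &
     (opnorm (fun f x => (s f x - t f x)%R) <= eps%:E)%E].

Definition weakly_approx_controlled (X Y : choiceType)
    (dX : X -> X -> R) (dY : Y -> Y -> R)
    (T : (X -> H) -> (Y -> H)) (Tstar : (Y -> H) -> (X -> H)) : Prop :=
  forall r eps : R, 0 <= r -> 0 < eps -> exists Rr : R, 0 <= Rr /\
    forall t : (X -> H) -> (X -> H), bounded_op t -> (opnorm t <= 1%:E)%E ->
      propagation_le dX t r ->
      approximable dY (fun g => T (t (Tstar g))) eps Rr.
End Hilbert.
End Defs.

From HB Require Import structures.
From mathcomp Require Import all_boot all_order all_algebra.
From mathcomp Require Import all_classical all_reals all_analysis.
From mathcomp Require Import complex.
From mathcomp Require Import ring lra.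
Import Order.TTheory GRing.Theory Num.Theory Normc.
Local Open Scope classical_set_scope.
Local Open Scope ring_scope.

(* Pick unit vectors [u], [w] supported in [A] with [||chi_C T u||] and
   [||chi_C' T w||] larger than [delta / 2].  The rank-one operator
   [t h = <h, u> w] has norm at most 1 and propagation at most [r], since it
   only sees and produces vectors supported in [A]; so [T t T^*] is
   [delta^2 / 8]-close to some [s] of propagation [R].  For [g = chi_C T u]
   one has [<T^* g, u> = ||g||^2], hence [T t T^* g = ||g||^2 T w], whereas
   [chi_C' (s g) = 0] as soon as [d(C, C') > R].  Comparing on [C'] gives
   [||g|| ||chi_C' T w|| <= delta^2 / 4], contradicting the choice of [u], [w]. *)

Set Implicit Arguments.
Unset Strict Implicit.

Section InnerProduct.
Variables (R : realType) (H : lmodType R[i]) (ip : H -> H -> R[i]).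
Hypothesis hH : is_hilbert ip.
Local Notation hn := (hnorm ip).

Lemma ipDZl (a : R[i]) u v w : ip (a *: u + v) w = a * ip u w + ip v w.
Proof. by case: hH. Qed.

Lemma ipC u v : ip u v = conjc (ip v u).
Proof. by case: hH. Qed.

Lemma ip_self_ge0 u : 0 <= ip u u.
Proof. by case: hH. Qed.

Lemma ip_self_eq0 u : ip u u = 0 -> u = 0.
Proof. by case: hH => _ _ _ + _; apply. Qed.

Lemma ipDl u v w : ip (u + v) w = ip u w + ip v w.
Proof. by have := ipDZl 1 u v w; rewrite scale1r mul1r. Qed.

Lemma ip0l w : ip 0 w = 0.
Proof.
have := ipDl 0 0 w; rewrite addr0 => /(congr1 (fun z => z - ip 0 w)).
by rewrite subrr addrK.
Qed.

Lemma ip0r w : ip w 0 = 0.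
Proof. by rewrite ipC ip0l conjc0. Qed.

Lemma ipZl a u w : ip (a *: u) w = a * ip u w.
Proof. by have := ipDZl a u 0 w; rewrite addr0 ip0l addr0. Qed.

Lemma ipZr a u w : ip w (a *: u) = conjc a * ip w u.
Proof. by rewrite ipC ipZl rmorphM /= -ipC. Qed.

Lemma ipDr u v w : ip w (u + v) = ip w u + ip w v.
Proof. by rewrite ipC ipDl rmorphD /= -!ipC. Qed.

Lemma Im_ip_self u : complex.Im (ip u u) = 0.
Proof. exact: ger0_Im (ip_self_ge0 u). Qed.

Lemma Re_ip_self_ge0 u : 0 <= complex.Re (ip u u).
Proof. by have := ip_self_ge0 u; rewrite lecE => /andP[]. Qed.

Lemma hnorm_ge0 u : 0 <= hn u.
Proof. exact: sqrtr_ge0. Qed.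

Lemma sqr_hnorm u : hn u ^+ 2 = complex.Re (ip u u).
Proof. by rewrite sqr_sqrtr // Re_ip_self_ge0. Qed.

Lemma hnorm0 : hn 0 = 0.
Proof. by rewrite /hnorm ip0l sqrtr0. Qed.

Lemma hnorm_eq0 u : hn u = 0 -> u = 0.
Proof.
move=> u0; apply: ip_self_eq0; apply/eqP; rewrite eq_complex Im_ip_self.
by rewrite -sqr_hnorm u0 expr0n !eqxx.
Qed.

Lemma hnormZ c u : hn (c *: u) = normc c * hn u.
Proof.
rewrite /hnorm ipZl ipZr mulrA; case: c => a b.
rewrite [normc _]/= -sqrtrM ?addr_ge0 ?sqr_ge0 //; congr Num.sqrt.
case: (ip u u) (Im_ip_self u) => x y /= ->.
by rewrite mulrN opprK mulr0 subr0 -!expr2.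
Qed.

Lemma Re_ip_scaleD (s : R) a b :
  complex.Re (ip ((s%:C)%C *: a + b) ((s%:C)%C *: a + b)) =
  s ^+ 2 * hn a ^+ 2 + 2 * s * complex.Re (ip a b) + hn b ^+ 2.
Proof.
rewrite ipDl !ipDr !ipZl !ipZr !sqr_hnorm (ipC b a).
case: (ip a a) (Im_ip_self a) => ? ? /= ->; case: (ip a b) => ? ? /=.
by case: (ip b b) => ? ? /=; ring.
Qed.

(* The quadratic [s |-> |s a + b|^2] is nonnegative; with [s = -+ l] this is
   [2 |Re <a, b>| <= l |a|^2 + |b|^2 / l]. *)
Lemma normr_Re_ip_le (l : R) a b : 0 < l ->
  `|complex.Re (ip a b)| <= (l * hn a ^+ 2 + l^-1 * hn b ^+ 2) / 2.
Proof.
move=> l0; have lneq0 : l != 0 by rewrite gt_eqF.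
have q s : 0 <= s ^+ 2 * hn a ^+ 2 + 2 * s * complex.Re (ip a b) + hn b ^+ 2.
  by rewrite -Re_ip_scaleD Re_ip_self_ge0.
have -> : (l * hn a ^+ 2 + l^-1 * hn b ^+ 2) / 2 =
    (l ^+ 2 * hn a ^+ 2 + hn b ^+ 2) / (2 * l) by field.
have hl : 0 < 2 * l by rewrite mulr_gt0.
rewrite ler_norml lerNl !ler_pdivlMr //.
by have := q l; have := q (- l); rewrite sqrrN => ? ?; apply/andP; split; nra.
Qed.

Lemma normr_Im_ip_le (l : R) a b : 0 < l ->
  `|complex.Im (ip a b)| <= (l * hn a ^+ 2 + l^-1 * hn b ^+ 2) / 2.
Proof.
move=> l0; have := normr_Re_ip_le a ('i%C *: b) l0.
rewrite hnormZ ipZr [normc _]/= expr0n expr1n add0r sqrtr1 mul1r.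
suff -> : complex.Re ('i^*%C * ip a b) = complex.Im (ip a b) by [].
by case: (ip a b) => ? ? /=; ring.
Qed.

Lemma hnormD_sqr_le a b : hn (a + b) ^+ 2 <= 2 * (hn a ^+ 2 + hn b ^+ 2).
Proof.
rewrite sqr_hnorm; have := Re_ip_scaleD 1 a b; rewrite scale1r => ->.
have := normr_Re_ip_le a b ltr01; rewrite invr1 !mul1r => /ler_normlP[_ ?].
lra.
Qed.

End InnerProduct.

Section RealSums.
Variables (R : realType) (X : choiceType).
Implicit Types (p q u v : X -> R).

Definition esumr p : \bar R := \esum_(x in [set: X]) (p x)%:E.
Definition summabler u : Prop := (esumr (fun x => `|u x|%R) < +oo)%E.

Lemma esumr_ge0 p : (forall x, 0 <= p x) -> (0 <= esumr p)%E.
Proof. by move=> p0; apply: esum_ge0 => x _; rewrite lee_fin. Qed.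

Lemma le_esumr p q : (forall x, p x <= q x) -> (esumr p <= esumr q)%E.
Proof. by move=> pq; apply: le_esum => x _; rewrite lee_fin. Qed.

Lemma esumrD p q : (forall x, 0 <= p x) -> (forall x, 0 <= q x) ->
  esumr (fun x => p x + q x) = (esumr p + esumr q)%E.
Proof.
move=> p0 q0; rewrite /esumr -esumD => [|x _|x _]; last 2 first.
- by rewrite lee_fin.
- by rewrite lee_fin.
by apply: eq_esum => x _; rewrite EFinD.
Qed.

Lemma esumrZ c p : 0 <= c -> (forall x, 0 <= p x) ->
  esumr (fun x => c * p x) = (c%:E * esumr p)%E.
Proof.
move=> c0 p0; rewrite /esumr /esum -ereal_supZl //; last first.
  by apply/set0P; exists 0%E, set0; [exact: fsets_set0 | rewrite fsbig_set0].
have p0E i : (0 <= (p i)%:E)%E by rewrite lee_fin.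
congr ereal_sup; apply/seteqP; split=> _ [A fA <-].
  by exists (\sum_(x \in A) (p x)%:E)%E; [exists A | rewrite ge0_mule_fsumr].
by case: fA => B fB <-; exists B => //; rewrite ge0_mule_fsumr.
Qed.

Lemma esumr0 : esumr (fun=> 0) = 0%E.
Proof. exact: esum1. Qed.

Lemma esumr_fin_num p : (forall x, 0 <= p x) -> (esumr p < +oo)%E ->
  esumr p \is a fin_num.
Proof. by move=> p0; rewrite ge0_fin_numE // esumr_ge0. Qed.

Lemma esumr_eq0 p : (forall x, 0 <= p x) -> esumr p = 0%E -> forall x, p x = 0.
Proof.
move=> p0 sp0 x; apply/eqP; rewrite eq_le p0 andbT -lee_fin -[X in (_ <= X)%E]sp0.
apply: esum_ge; exists [set x]; first by split=> //; exact: finite_set1.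
by rewrite fsbig_set1.
Qed.

Lemma summabler_le u p : (forall x, `|u x| <= p x) -> (esumr p < +oo)%E ->
  summabler u.
Proof. by move=> up; apply: le_lt_trans; apply: le_esumr. Qed.

Lemma summablerD u v : summabler u -> summabler v -> summabler (fun x => u x + v x).
Proof.
move=> su sv; apply: (@summabler_le _ (fun x => `|u x| + `|v x|)).
  by move=> x; exact: ler_normD.
by rewrite esumrD //; exact: lte_add_pinfty.
Qed.

Lemma summablerZ c u : summabler u -> summabler (fun x => c * u x).
Proof.
move=> su; apply: (@summabler_le _ (fun x => `|c| * `|u x|)).
  by move=> x; rewrite normrM.
by rewrite esumrZ //; apply: lte_mul_pinfty; rewrite ?lee_fin.
Qed.

Lemma summablerN u : summabler u -> summabler (fun x => - u x).
Proof.
by move=> /(summablerZ (-1)); under eq_fun do rewrite mulN1r.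
Qed.

Let pos u x := Num.max (u x) 0.
Let neg u x := Num.max (- u x) 0.

Let pos_ge0 u x : 0 <= pos u x. Proof. by rewrite le_max lexx orbT. Qed.
Let neg_ge0 u x : 0 <= neg u x. Proof. by rewrite le_max lexx orbT. Qed.

Let pos_neg u x : u x = pos u x - neg u x.
Proof.
rewrite /pos /neg; case: (leP 0 (u x)) => u0.
  by rewrite (max_idPr _) ?subr0 // oppr_le0.
by rewrite (max_idPl _) ?sub0r ?opprK // oppr_ge0 ltW.
Qed.

Let summable_pos u : summabler u -> (esumr (pos u) < +oo)%E.
Proof.
by apply: le_lt_trans; apply: le_esumr => x; rewrite ge_max normr_ge0 ler_norm.
Qed.

Let summable_neg u : summabler u -> (esumr (neg u) < +oo)%E.
Proof.
move=> /summablerN /summable_pos; apply: le_lt_trans; apply: le_esumr => x.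
by rewrite /pos /neg.
Qed.

Lemma rsum_decomp u p q : (forall x, 0 <= p x) -> (forall x, 0 <= q x) ->
  (esumr p < +oo)%E -> (esumr q < +oo)%E -> (forall x, u x = p x - q x) ->
  rsum u = fine (esumr p) - fine (esumr q).
Proof.
move=> p0 q0 sp sq upq.
have su : summabler u.
  apply: (@summabler_le _ (fun x => p x + q x)); last first.
    by rewrite esumrD //; exact: lte_add_pinfty.
  by move=> x; rewrite upq (le_trans (ler_normB _ _)) // !ger0_norm.
have e : esumr (fun x => pos u x + q x) = esumr (fun x => neg u x + p x).
  by congr esumr; apply: funext => x; move: (upq x); rewrite pos_neg; lra.
move: e; rewrite !esumrD //.
rewrite -(fineK (esumr_fin_num (pos_ge0 u) (summable_pos su))).
rewrite -(fineK (esumr_fin_num (neg_ge0 u) (summable_neg su))).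
rewrite -(fineK (esumr_fin_num p0 sp)) -(fineK (esumr_fin_num q0 sq)) -!EFinD.
by move=> [] /=; rewrite /rsum; lra.
Qed.

Lemma rsum_ge0 p : (forall x, 0 <= p x) -> rsum p = fine (esumr p).
Proof.
move=> p0; rewrite /rsum.
have -> : \esum_(x in [set: X]) (Num.max (p x) 0)%:E = esumr p.
  by apply: eq_esum => x _; rewrite (max_idPl _).
have -> : \esum_(x in [set: X]) (Num.max (- p x) 0)%:E = 0%E.
  by apply: esum1 => x _; rewrite (max_idPr _) // oppr_le0.
by rewrite subr0.
Qed.

Lemma rsum0 : rsum (fun _ : X => 0 : R) = 0.
Proof. by rewrite rsum_ge0 // esumr0. Qed.

Lemma rsumN u : rsum (fun x => - u x) = - rsum u.
Proof.
rewrite /rsum opprB; congr (fine _ - fine _).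
by apply: eq_esum => x _; rewrite opprK.
Qed.

Lemma rsumD u v : summabler u -> summabler v ->
  rsum (fun x => u x + v x) = rsum u + rsum v.
Proof.
move=> su sv; have [Pu Pv] := (summable_pos su, summable_pos sv).
have [Nu Nv] := (summable_neg su, summable_neg sv).
rewrite (@rsum_decomp _ (fun x => pos u x + pos v x) (fun x => neg u x + neg v x)).
- rewrite !esumrD // !fineD ?esumr_fin_num //; rewrite /rsum; ring.
- by move=> x; rewrite addr_ge0.
- by move=> x; rewrite addr_ge0.
- by rewrite esumrD //; exact: lte_add_pinfty.
- by rewrite esumrD //; exact: lte_add_pinfty.
- by move=> x; rewrite [u x]pos_neg [v x]pos_neg; ring.
Qed.

Lemma rsumZ c u : summabler u -> rsum (fun x => c * u x) = c * rsum u.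
Proof.
wlog c0 : c / 0 <= c => [hwlog|] su.
  have [/hwlog -> //|c0] := leP 0 c.
  rewrite -[c]opprK; under eq_fun do rewrite mulNr.
  by rewrite rsumN hwlog ?mulNr // oppr_ge0 ltW.
have [Pu Nu] := (summable_pos su, summable_neg su).
rewrite (@rsum_decomp _ (fun x => c * pos u x) (fun x => c * neg u x)).
- by rewrite !esumrZ // !fineM ?esumr_fin_num // /rsum mulrBr.
- by move=> x; rewrite mulr_ge0.
- by move=> x; rewrite mulr_ge0.
- by rewrite esumrZ // lte_mul_pinfty ?lee_fin ?esumr_fin_num.
- by rewrite esumrZ // lte_mul_pinfty ?lee_fin ?esumr_fin_num.
- by move=> x; rewrite [u x]pos_neg mulrBr.
Qed.

Lemma rsumZD c u v : summabler u -> summabler v ->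
  rsum (fun x => c * u x + v x) = c * rsum u + rsum v.
Proof. by move=> su sv; rewrite rsumD ?rsumZ //; exact: summablerZ. Qed.

Lemma ler_rsum u v : summabler u -> summabler v -> (forall x, u x <= v x) ->
  rsum u <= rsum v.
Proof.
move=> su sv uv; have -> : v = (fun x => u x + (v x - u x)).
  by apply: funext => x; rewrite addrC subrK.
rewrite rsumD //; last by apply: summablerD => //; exact: summablerN.
rewrite lerDl rsum_ge0 => [|x]; last by rewrite subr_ge0.
by rewrite fine_ge0 // esumr_ge0 // => x; rewrite subr_ge0.
Qed.

Definition csummable (u : X -> R[i]) : Prop :=
  summabler (fun x => complex.Re (u x)) /\ summabler (fun x => complex.Im (u x)).

Lemma csumZD a (u v : X -> R[i]) : csummable u -> csummable v ->
  csum (fun x => a * u x + v x) = a * csum u + csum v.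
Proof.
case: a => a b [sRu sIu] [sRv sIv]; rewrite /csum.
have -> : (fun x => complex.Re ((a +i* b)%C * u x + v x)) =
    (fun x => a * complex.Re (u x) + (- b * complex.Im (u x) + complex.Re (v x))).
  by apply: funext => x; case: (u x) => ? ?; case: (v x) => ? ?; rewrite /=; ring.
have -> : (fun x => complex.Im ((a +i* b)%C * u x + v x)) =
    (fun x => a * complex.Im (u x) + (b * complex.Re (u x) + complex.Im (v x))).
  by apply: funext => x; case: (u x) => ? ?; case: (v x) => ? ?; rewrite /=; ring.
have sR : summabler (fun x => - b * complex.Im (u x) + complex.Re (v x)).
  by apply: summablerD => //; exact: summablerZ.
have sI : summabler (fun x => b * complex.Re (u x) + complex.Im (v x)).
  by apply: summablerD => //; exact: summablerZ.
rewrite !rsumZD //.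
by apply/eqP; rewrite eq_complex; apply/andP; split; apply/eqP; rewrite /=; ring.
Qed.

Lemma csumJ (u : X -> R[i]) : csum (fun x => conjc (u x)) = conjc (csum u).
Proof.
rewrite /csum; apply/eqP; rewrite eq_complex /= -(rsumN (fun x => complex.Im (u x))).
by apply/andP; split; apply/eqP; congr rsum; apply: funext => x; case: (u x).
Qed.

Lemma csum_real p : csum (fun x => (p x)%:C%C) = (rsum p)%:C%C.
Proof.
by rewrite /csum (_ : (fun x => complex.Im (p x)%:C%C) = fun=> 0) ?rsum0.
Qed.

Lemma csum0 : csum (fun _ : X => 0 : R[i]) = 0.
Proof. by have := csum_real (fun=> 0); rewrite rsum0. Qed.

End RealSums.

Lemma normc_ge0 (R : rcfType) (c : R[i]) : 0 <= normc c.
Proof. by case: c => a b; exact: sqrtr_ge0. Qed.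

Lemma normc_real (R : rcfType) (c : R) : normc (c%:C)%C = `|c|.
Proof. by rewrite /= expr0n addr0 sqrtr_sqr. Qed.

Section ProjectionChi.
Variables (R : realType) (H : lmodType R[i]) (X : choiceType).
Implicit Types (A : set X) (f : X -> H).

Lemma chiZ A (a : R[i]) f : chi A (fun x => a *: f x) = (fun x => a *: chi A f x).
Proof. by apply: funext => x; rewrite /chi; case: ifP => _ //; rewrite scaler0. Qed.

Lemma chi0 A : chi A (fun _ : X => (0 : H)) = (fun _ => 0).
Proof. by apply: funext => x; rewrite /chi; case: ifP. Qed.

Lemma chi_out A f x : ~ A x -> chi A f x = 0.
Proof. by rewrite /chi => /asboolPn/negbTE ->. Qed.

End ProjectionChi.

Section L2Space.
Variables (R : realType) (H : lmodType R[i]) (ip : H -> H -> R[i]).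
Hypothesis hH : is_hilbert ip.
Variable X : choiceType.
Implicit Types (f g u : X -> H).
Local Notation hn := (hnorm ip).

Lemma l2sq_ge0 f : (0 <= l2sq ip f)%E.
Proof. by apply: esumr_ge0 => x; exact: sqr_ge0. Qed.

Lemma l2sq_fin_num f : in_l2 ip f -> l2sq ip f \is a fin_num.
Proof. by move=> f2; rewrite ge0_fin_numE ?l2sq_ge0. Qed.

Lemma l2norm_ge0 f : 0 <= l2norm ip f.
Proof. exact: sqrtr_ge0. Qed.

Lemma sqr_l2norm f : l2norm ip f ^+ 2 = fine (l2sq ip f).
Proof. by rewrite sqr_sqrtr // fine_ge0 // l2sq_ge0. Qed.

Lemma summabler_hnorm2 f : in_l2 ip f -> summabler (fun x => hn (f x) ^+ 2).
Proof. by apply: summabler_le => x; rewrite ger0_norm ?sqr_ge0. Qed.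

Lemma l2sq0 : l2sq ip (fun _ : X => 0) = 0%E.
Proof. by apply: esum1 => x _; rewrite hnorm0 // expr0n. Qed.

Lemma in_l2_0 : in_l2 ip (fun _ : X => 0).
Proof. by rewrite /in_l2 l2sq0. Qed.

Lemma l2norm0 : l2norm ip (fun _ : X => 0) = 0.
Proof. by rewrite /l2norm l2sq0 sqrtr0. Qed.

Lemma l2sqZ c f : l2sq ip (fun x => c *: f x) = ((normc c ^+ 2)%:E * l2sq ip f)%E.
Proof.
rewrite -esumrZ ?sqr_ge0 // => [|x]; last exact: sqr_ge0.
by apply: eq_esum => x _; rewrite hnormZ // exprMn.
Qed.

Lemma in_l2Z c f : in_l2 ip f -> in_l2 ip (fun x => c *: f x).
Proof.
by move=> f2; rewrite /in_l2 l2sqZ lte_mul_pinfty ?lee_fin ?sqr_ge0.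
Qed.

Lemma l2normZ c f : in_l2 ip f -> l2norm ip (fun x => c *: f x) = normc c * l2norm ip f.
Proof.
move=> f2; rewrite /l2norm l2sqZ fineM ?l2sq_fin_num //=.
by rewrite sqrtrM ?sqr_ge0 // sqrtr_sqr ger0_norm ?normc_ge0.
Qed.

Lemma in_l2D f g : in_l2 ip f -> in_l2 ip g -> in_l2 ip (fun x => f x + g x).
Proof.
move=> f2 g2; apply: (@le_lt_trans _ _
  (esumr (fun x => 2 * (hn (f x) ^+ 2 + hn (g x) ^+ 2)))).
  by apply: le_esumr => x; exact: hnormD_sqr_le.
rewrite esumrZ ?esumrD // => [|x|x|x]; try by rewrite ?addr_ge0 ?sqr_ge0.
by rewrite lte_mul_pinfty ?lee_fin ?fin_numD ?l2sq_fin_num //; exact: lte_add_pinfty.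
Qed.

Lemma in_l2B f g : in_l2 ip f -> in_l2 ip g -> in_l2 ip (fun x => f x - g x).
Proof.
move=> f2 /(in_l2Z (-1)) g2; have := in_l2D f2 g2.
by under eq_fun do rewrite scaleN1r.
Qed.

Lemma l2norm_eq0 f : in_l2 ip f -> l2norm ip f = 0 -> forall x, f x = 0.
Proof.
move=> f2 f0 x; apply: (hnorm_eq0 hH); apply/eqP; rewrite -sqrf_eq0; apply/eqP.
have l2f0 : l2sq ip f = 0%E.
  by rewrite -[l2sq _ _]fineK ?l2sq_fin_num // -sqr_l2norm f0 expr0n.
by move: x; apply: esumr_eq0 l2f0 => x; exact: sqr_ge0.
Qed.

Lemma l2sq_chi_le A f : (l2sq ip (chi A f) <= l2sq ip f)%E.
Proof.
apply: le_esumr => x; rewrite ler_sqr ?nnegrE ?hnorm_ge0 // /chi.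
by case: ifP => _; rewrite ?lexx // hnorm0 // hnorm_ge0.
Qed.

Lemma in_l2_chi A f : in_l2 ip f -> in_l2 ip (chi A f).
Proof. exact/le_lt_trans/l2sq_chi_le. Qed.

Lemma l2norm_chi_le A f : in_l2 ip f -> l2norm ip (chi A f) <= l2norm ip f.
Proof.
move=> f2; apply/ler_wsqrtr/fine_le; last exact: l2sq_chi_le.
  exact/l2sq_fin_num/in_l2_chi.
exact: l2sq_fin_num.
Qed.

Lemma csummable_ip f g : in_l2 ip f -> in_l2 ip g ->
  csummable (fun x => ip (f x) (g x)).
Proof.
move=> f2 g2.
have lt : (esumr (fun x => (1 * hn (f x) ^+ 2 + 1^-1 * hn (g x) ^+ 2) / 2)%R < +oo)%E.
  under eq_fun do rewrite invr1 !mul1r mulrC.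
  rewrite esumrZ ?esumrD ?invr_ge0 // => [|x|x|x]; try by rewrite ?addr_ge0 ?sqr_ge0.
  by rewrite lte_mul_pinfty ?lee_fin ?fin_numD ?l2sq_fin_num //; exact: lte_add_pinfty.
by split; apply: summabler_le lt => x; [exact: normr_Re_ip_le | exact: normr_Im_ip_le].
Qed.

Lemma l2ipZD a f g u : in_l2 ip f -> in_l2 ip g -> in_l2 ip u ->
  l2ip ip (fun x => a *: f x + g x) u = a * l2ip ip f u + l2ip ip g u.
Proof.
move=> f2 g2 u2; rewrite /l2ip -csumZD; try exact: csummable_ip.
by congr csum; apply: funext => x; rewrite ipDZl.
Qed.

Lemma l2ip_eq0 f g : (forall x, ip (f x) (g x) = 0) -> l2ip ip f g = 0.
Proof. by move=> fg0; rewrite /l2ip (_ : (fun x => _) = fun=> 0) ?csum0 //; exact: funext. Qed.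

Lemma l2ipZl a f u : in_l2 ip f -> in_l2 ip u ->
  l2ip ip (fun x => a *: f x) u = a * l2ip ip f u.
Proof.
move=> f2 u2; have := l2ipZD a f2 in_l2_0 u2.
rewrite (l2ip_eq0 (fun x => ip0l hH (u x))) addr0 => <-.
by congr l2ip; apply: funext => x; rewrite addr0.
Qed.

Lemma l2ipC f g : l2ip ip f g = conjc (l2ip ip g f).
Proof. by rewrite /l2ip -csumJ; congr csum; apply: funext => x; rewrite ipC. Qed.

Lemma l2ip_self g : l2ip ip g g = (l2norm ip g ^+ 2)%:C%C.
Proof.
rewrite sqr_l2norm -rsum_ge0 => [|x]; last exact: sqr_ge0.
rewrite -csum_real /l2ip; congr csum; apply: funext => x.
by rewrite sqr_hnorm //; case: (ip (g x) (g x)) (Im_ip_self hH (g x)) => ? ? /= ->.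
Qed.

Lemma l2ip_chi_self (C : set X) f : l2ip ip f (chi C f) = l2ip ip (chi C f) (chi C f).
Proof.
congr csum; apply: funext => x; rewrite /chi.
by case: ifP => _ //; rewrite ip0r ?ip0l.
Qed.

Lemma Re_l2ip_le (l : R) f u : 0 < l -> in_l2 ip f -> in_l2 ip u ->
  complex.Re (l2ip ip f u) <= (l * l2norm ip f ^+ 2 + l^-1 * l2norm ip u ^+ 2) / 2.
Proof.
move=> l0 f2 u2; have [sRe _] := csummable_ip f2 u2.
have [sf su] := (summabler_hnorm2 f2, summabler_hnorm2 u2).
apply: (@le_trans _ _
  (rsum (fun x => l / 2 * hn (f x) ^+ 2 + l^-1 / 2 * hn (u x) ^+ 2))).
  apply: ler_rsum sRe _ _ => [|x]; first by apply: summablerD; exact: summablerZ.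
  by apply: le_trans (ler_norm _) (le_trans (normr_Re_ip_le hH _ _ l0) _); lra.
rewrite rsumZD ?rsumZ //; last exact: summablerZ.
rewrite !rsum_ge0 => [|x|x]; try exact: sqr_ge0.
by rewrite -[esumr _]/(l2sq ip f) -[esumr _]/(l2sq ip u) -!sqr_l2norm; lra.
Qed.

(* Cauchy-Schwarz: rotate [<g, u>] onto the positive reals and take
   [l = 1 / ||g||] in [Re_l2ip_le]. *)
Lemma normc_l2ip_le g u : in_l2 ip g -> in_l2 ip u -> l2norm ip u = 1 ->
  normc (l2ip ip g u) <= l2norm ip g.
Proof.
move=> g2 u2 u1; set z := l2ip ip g u.
have [->|z0] := eqVneq z 0; first by rewrite normc0 l2norm_ge0.
have nz : 0 < normc z.
  by rewrite lt_def normc_ge0 andbT; apply: contra z0 => /eqP/eq0_normc ->.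
pose th := conjc z * ((normc z)^-1)%:C%C.
have normc_th : normc th = 1.
  rewrite normcM normc_real ger0_norm ?invr_ge0 ?normc_ge0 //.
  by rewrite (_ : normc _ = normc z) ?divff ?gt_eqF //; case: (z) => ? ? /=; rewrite sqrrN.
have Re_thz : complex.Re (th * z) = normc z.
  rewrite /th mulrC mulrA; case: (z) nz => a b /= nz.
  rewrite mulr0 subr0 mulrN opprK -!expr2 -[X in X / _]sqr_sqrtr ?addr_ge0 ?sqr_ge0 //.
  by rewrite expr2 mulfK // gt_eqF.
have [g0|gn0] := eqVneq (l2norm ip g) 0.
  suff : z = 0 by move/eqP; rewrite (negPf z0).
  by apply: l2ip_eq0 => x; rewrite (l2norm_eq0 g2 g0) ip0l.
have gp : 0 < l2norm ip g by rewrite lt_def gn0 l2norm_ge0.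
have lp : 0 < (l2norm ip g)^-1 by rewrite invr_gt0.
have := Re_l2ip_le lp (in_l2Z th g2) u2.
rewrite l2ipZl // -/z Re_thz l2normZ // normc_th u1 invrK mul1r expr1n mulr1.
by rewrite (_ : _ / 2 = l2norm ip g) //; field.
Qed.

End L2Space.

Section Operators.
Variables (R : realType) (H : lmodType R[i]) (ip : H -> H -> R[i]).
Hypothesis hH : is_hilbert ip.
Variables X Y : choiceType.
Implicit Types (t : (X -> H) -> (Y -> H)) (f : X -> H).

Lemma bounded_op0 t : bounded_op ip t -> t (fun _ => 0) = (fun _ => 0).
Proof.
case=> lin _ _; have := lin 1 _ _ (in_l2_0 hH X) (in_l2_0 hH X).
rewrite (_ : (fun _ => 1 *: 0 + 0) = (fun _ => 0)); last first.
  by apply: funext => x; rewrite scaler0 addr0.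
move=> e; apply: funext => y; have /= := congr1 (fun F => F y) e.
by rewrite scale1r => /(congr1 (fun z => z - t (fun=> 0) y)); rewrite subrr addrK.
Qed.

Lemma bounded_opZ t a f : bounded_op ip t -> in_l2 ip f ->
  t (fun x => a *: f x) = (fun y => a *: t f y).
Proof.
move=> bt f2; have [lin _ _] := bt; have := lin a _ _ f2 (in_l2_0 hH X).
rewrite bounded_op0 // (_ : (fun x => a *: f x + 0) = (fun x => a *: f x)).
  by move=> ->; apply: funext => y; rewrite addr0.
by apply: funext => x; rewrite addr0.
Qed.

Lemma opnorm_le_ub t c : 0 <= c -> opnorm_le ip t c -> (opnorm ip t <= c%:E)%E.
Proof. by move=> c0 tc; apply: ereal_inf_lbound; exists c. Qed.

Lemma opnorm_witness t c : 0 <= c -> (c%:E < opnorm ip t)%E ->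
  exists2 f, in_l2 ip f & c * l2norm ip f < l2norm ip (t f).
Proof.
move=> c0 ct; apply: contrapT => nf.
suff : (opnorm ip t <= c%:E)%E by rewrite leNgt ct.
apply: opnorm_le_ub => // f f2; rewrite leNgt; apply/negP => tf.
by apply: nf; exists f.
Qed.

Lemma l2norm_op_le t c e f : (opnorm ip t <= c%:E)%E -> c < e -> in_l2 ip f ->
  l2norm ip (t f) <= e * l2norm ip f.
Proof.
move=> tc ce f2; have /ereal_inf_lt[_ [d [d0 td] <-]] : (opnorm ip t < e%:E)%E.
  by apply: le_lt_trans tc _; rewrite lte_fin.
rewrite lte_fin => de; apply: le_trans (td f f2) _.
by rewrite ler_wpM2r ?l2norm_ge0 // ltW.
Qed.

(* Normalizing [chi A f] for a witness [f] of [c < ||chi C T chi A||]. *)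
Lemma opnorm_chi_witness t (A : set X) (C : set Y) c :
  bounded_op ip t -> 0 <= c -> (c%:E < opnorm ip (fun f => chi C (t (chi A f))))%E ->
  exists u, [/\ in_l2 ip u, l2norm ip u = 1, (forall x, ~ A x -> u x = 0) &
                c < l2norm ip (chi C (t u))].
Proof.
move=> bt c0 /(opnorm_witness c0)[f f2 cf]; have [_ tl2 _] := bt.
set v := chi A f in cf; have v2 : in_l2 ip v := in_l2_chi hH A f2.
have [v0|vn0] := eqVneq (l2norm ip v) 0.
  move: cf; rewrite (_ : v = fun _ => 0); last exact/funext/(l2norm_eq0 hH v2).
  by rewrite bounded_op0 // chi0 (l2norm0 hH) ltNge mulr_ge0 ?l2norm_ge0.
have vp : 0 < l2norm ip v by rewrite lt_def vn0 l2norm_ge0.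
pose k : R[i] := ((l2norm ip v)^-1)%:C%C.
have nk : normc k = (l2norm ip v)^-1 by rewrite normc_real ger0_norm // invr_ge0 ltW.
exists (fun x => k *: v x); split.
- exact: in_l2Z.
- by rewrite (l2normZ hH) // nk mulVf.
- by move=> x Ax; rewrite /v chi_out // scaler0.
rewrite bounded_opZ // chiZ (l2normZ hH); last exact/(in_l2_chi hH)/tl2.
rewrite nk ltr_pdivlMl //.
apply: le_lt_trans cf; rewrite mulrC ler_wpM2l //.
exact: (l2norm_chi_le hH).
Qed.

End Operators.

Section RankOne.
Variables (R : realType) (H : lmodType R[i]) (ip : H -> H -> R[i]).
Hypothesis hH : is_hilbert ip.
Variable X : choiceType.
Variables u w : X -> H.
Hypotheses (u2 : in_l2 ip u) (u1 : l2norm ip u = 1) (w2 : in_l2 ip w).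

Definition rank_one (h : X -> H) : X -> H := fun x => l2ip ip h u *: w x.

Lemma rank_one_opnorm_le : opnorm_le ip rank_one (l2norm ip w).
Proof.
move=> h h2; rewrite /rank_one (l2normZ hH) // mulrC ler_wpM2l ?l2norm_ge0 //.
exact: (normc_l2ip_le hH).
Qed.

Lemma rank_one_bounded : bounded_op ip rank_one.
Proof.
split; last by exists (l2norm ip w); exact: rank_one_opnorm_le.
  move=> a f g f2 g2; apply: funext => x.
  by rewrite /rank_one (l2ipZD hH) // scalerDl scalerA.
by move=> h _; exact: (in_l2Z hH).
Qed.

Lemma rank_one_propagation (d : X -> X -> R) (A : set X) (r : R) :
  (diam d A <= r%:E)%E -> (forall x, ~ A x -> u x = 0) ->
  (forall x, ~ A x -> w x = 0) -> propagation_le ip d rank_one r.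
Proof.
move=> dA uA wA B B' rBB' f f2; apply: funext => x; rewrite /chi /rank_one.
case: ifP => [/asboolP B'x|_] //; have [Ax|/wA ->] := pselect (A x); last first.
  by rewrite scaler0.
rewrite l2ip_eq0 ?scale0r // => y; case: ifP => [/asboolP By|_]; last exact: (ip0l hH).
have [Ay|/uA ->] := pselect (A y); last exact: (ip0r hH).
suff : (setdist d B B' <= r%:E)%E by rewrite leNgt rBB'.
apply: le_trans dA; apply: (@le_trans _ _ (d y x)%:E).
  by apply: ereal_inf_lbound; exists y => //; exists x.
by apply: ereal_sup_ubound; exists y => //; exists x.
Qed.

End RankOne.

Section RankOneDefect.
Variables (R : realType) (H : lmodType R[i]) (ip : H -> H -> R[i]).
Hypothesis hH : is_hilbert ip.
Variables (X Y : choiceType) (dY : Y -> Y -> R).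
Variables (T : (X -> H) -> (Y -> H)) (Tstar : (Y -> H) -> (X -> H)).
Hypotheses (hT : bounded_op ip T) (hTstar : is_adjoint ip T Tstar).

Lemma adjoint_chi_l2ip (C : set Y) u : in_l2 ip u ->
  l2ip ip (Tstar (chi C (T u))) u = (l2norm ip (chi C (T u)) ^+ 2)%:C%C.
Proof.
move=> u2; have [_ Tl2 _] := hT; have [_ adj] := hTstar.
have g2 := in_l2_chi hH C (Tl2 u u2).
by rewrite (l2ipC hH) -adj // (l2ip_chi_self hH) (l2ip_self hH) conjc_real.
Qed.

(* With [g = chi C (T u)], the propagation of [s] kills [chi C' (s g)], so
   [chi C' (s g - T (rank_one u w (T^* g)))] is [- ||g||^2 chi C' (T w)]. *)
Lemma rank_one_defect_le u w (C C' : set Y) s (Rr e : R) :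
  in_l2 ip u -> l2norm ip u = 1 -> in_l2 ip w ->
  bounded_op ip s -> propagation_le ip dY s Rr -> (Rr%:E < setdist dY C C')%E ->
  (forall g, in_l2 ip g ->
     l2norm ip (fun y => s g y - T (rank_one ip u w (Tstar g)) y) <= e * l2norm ip g) ->
  l2norm ip (chi C (T u)) ^+ 2 * l2norm ip (chi C' (T w)) <= e * l2norm ip (chi C (T u)).
Proof.
move=> u2 u1 w2 [_ sl2 _] ps CC' se; have [_ Tl2 _] := hT; have [[_ Sl2 _] _] := hTstar.
set g := chi C (T u); have g2 : in_l2 ip g := in_l2_chi hH C (Tl2 u u2).
have sg0 : chi C' (s g) = (fun=> 0) := ps C C' CC' (T u) (Tl2 u u2).
set D := fun y => s g y - T (rank_one ip u w (Tstar g)) y.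
have D2 : in_l2 ip D by apply: (in_l2B hH); [exact: sl2 | exact/Tl2/(in_l2Z hH)].
have chiD : chi C' D = (fun y => (- (l2norm ip g ^+ 2)%:C%C) *: chi C' (T w) y).
  rewrite /D /rank_one (bounded_opZ hH) // (adjoint_chi_l2ip C u2).
  apply: funext => y; have := congr1 (fun F => F y) sg0; rewrite /chi.
  by case: ifP => _; [move=> ->; rewrite sub0r scaleNr | rewrite scaler0].
have := le_trans (l2norm_chi_le hH C' D2) (se g g2).
rewrite chiD (l2normZ hH); last exact/(in_l2_chi hH)/Tl2.
by rewrite normcN normc_real ger0_norm // sqr_ge0.
Qed.

End RankOneDefect.

Unset Implicit Arguments.

Theorem mainTheorem3 (R : realType) (X Y : choiceType)
    (dX : X -> X -> R) (dY : Y -> Y -> R)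
    (hX : is_metric dX) (hY : is_metric dY)
    (H : lmodType R[i]) (ip : H -> H -> R[i]) (hH : is_hilbert ip)
    (T : (X -> H) -> (Y -> H)) (Tstar : (Y -> H) -> (X -> H))
    (hT : bounded_op ip T) (hTstar : is_adjoint ip T Tstar)
    (hwac : weakly_approx_controlled ip dX dY T Tstar) :
  forall r delta : R, 0 <= r -> 0 < delta ->
  exists Rr : R, 0 <= Rr /\
    forall (A : set X) (Cs Cs' : set Y),
      (diam dX A <= r%:E)%E ->
      (delta%:E <= opnorm ip (fun f => chi Cs (T (chi A f))))%E ->
      (delta%:E <= opnorm ip (fun f => chi Cs' (T (chi A f))))%E ->
      (setdist dY Cs Cs' <= Rr%:E)%E.
Proof.
move=> r delta r0 d0; pose eps := delta ^+ 2 / 8.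
have eps0 : 0 < eps by rewrite divr_gt0 // exprn_gt0.
have [Rr [Rr0 hR]] := hwac r eps r0 eps0.
exists Rr; split => // A C C' dA hC hC'; rewrite leNgt; apply/negP => CC'.
have hd : 0 <= delta / 2 by rewrite divr_ge0 // ltW.
have hdd : ((delta / 2)%:E < delta%:E)%E by rewrite lte_fin; lra.
have [u [u2 u1 uA uC]] := opnorm_chi_witness hH hT hd (lt_le_trans hdd hC).
have [w [w2 w1 wA wC]] := opnorm_chi_witness hH hT hd (lt_le_trans hdd hC').
have t1 : (opnorm ip (rank_one ip u w) <= 1%:E)%E.
  by apply: opnorm_le_ub ler01 _; rewrite -w1; exact: rank_one_opnorm_le.
have [s [bs ps os]] := hR _ (rank_one_bounded hH u2 u1 w2) t1
  (rank_one_propagation hH dA uA wA).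
have e2 : eps < 2 * eps by rewrite ltr_pMl ?ltr1n.
move: (rank_one_defect_le hH hT hTstar u2 u1 w2 bs ps CC'
  (fun g g2 => l2norm_op_le os e2 g2)) uC wC; rewrite /eps.
move: (l2norm ip (chi C (T u))) (l2norm ip (chi C' (T w))) => G W GW uC wC.
have G0 : 0 < G by apply: le_lt_trans uC.
have : delta / 2 * (delta / 2) < G * W by rewrite ltr_pM.
nra.
Qed.
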